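(* Let $\varepsilon,\gamma>0$. There exists an $\varepsilon$-$\nabla_0$DP algorithm that, given a set $S$ of $n\ge\tilde O\!\left(\frac{1}{\varepsilon\gamma}\log d\right)$ labeled examples in $\{0,1\}^d\times\{0,1\}$ with $\mathrm{pol}(\perp)\ge2\gamma$, with probability at least $0.99$ outputs a prefix $p$ that is $\gamma$-polarizing and such that no prefix longer than $p$ is $2\gamma$-polarizing.
   Context: A prefix is a string $p\in\{0,1\}^\ell$, $0\le\ell\le d$; $\perp$ denotes the empty string. $f_{p*0}$ (resp. $f_{p*1}$) is the number of examples in $S$ of the form $(ps,0)$ (resp. $(ps,1)$) for some $s$. $\mathrm{pol}(p)=\min\{f_{p*0},f_{p*1}\}/n$, and $p$ is $\gamma$-polarizing if $\mathrm{pol}(p)\ge\gamma$. $\tilde O$ hides polylogarithmic factors (in $1/\gamma$ and $\log d$). Each example is a record in $\{0,1\}^{d+1}$ (label as an attribute); $M$ is $\varepsilon$-$\nabla_0$DP if for all datasets $S,S'$ differing only in one record and all sets $E$, $\Pr[M(S)\in E]\le e^{\varepsilon k}\Pr[M(S')\in E]$, where $k$ is the number of attributes on which the differing records differ. *)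

From HB Require Import structures.
From mathcomp Require Import all_boot all_order all_algebra.
From mathcomp Require Import reals sequences exp.
Set Implicit Arguments. Unset Strict Implicit. Unset Printing Implicit Defensive.
Import Order.TTheory GRing.Theory Num.Theory.
Local Open Scope ring_scope.

Definition example (d : nat) := (d.-tuple bool * bool)%type.

(* A dataset of n examples (a multiset, given as an n-tuple of records). *)
Definition dataset (d n : nat) := n.-tuple (example d).

Definition prefix (d : nat) := {l : 'I_d.+1 & l.-tuple bool}.
Definition pseq (d : nat) (p : prefix d) : seq bool := tval (tagged p).

Definition fcount (d : nat) (s : seq bool) (b : bool) (S : seq (example d)) : nat :=
  count (fun e : example d => (take (size s) (tval e.1) == s) && (e.2 == b)) S.

Definition pol (R : realType) (d n : nat) (s : seq bool) (S : dataset d n) : R :=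
  (minn (fcount s false S) (fcount s true S))%:R / n%:R.

Definition polarizing (R : realType) (d n : nat) (g : R) (s : seq bool)
  (S : dataset d n) : bool := g <= pol R s S.

Definition attr_dist (d : nat) (x y : example d) : nat :=
  #|[set i : 'I_d | tnth x.1 i != tnth y.1 i]| + (x.2 != y.2).

(* A randomized algorithm, described by its output distribution over prefixes. *)
Definition mechanism (R : realType) :=
  forall d n : nat, dataset d n -> {ffun prefix d -> R}.

Definition is_distribution (R : realType) (T : finType) (mu : {ffun T -> R}) : Prop :=
  (forall t, 0 <= mu t) /\ \sum_(t : T) mu t = 1.

Definition Pr (R : realType) (T : finType) (mu : {ffun T -> R}) (E : {set T}) : R :=
  \sum_(t in E) mu t.

Definition nabla0DP (R : realType) (eps : R) (M : mechanism R) : Prop :=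
  forall (d n : nat) (S S' : dataset d n) (i : 'I_n),
    (forall j : 'I_n, j != i -> tnth S j = tnth S' j) ->
    forall E : {set prefix d},
      Pr (M d n S) E <= expR (eps * (attr_dist (tnth S i) (tnth S' i))%:R)
                        * Pr (M d n S') E.

Definition good (R : realType) (g : R) (d n : nat) (S : dataset d n) : {set prefix d} :=
  [set p : prefix d | polarizing g (pseq p) S &&
     [forall q : prefix d, (size (pseq p) < size (pseq q))%N ==>
       ~~ polarizing (2 * g) (pseq q) S]].

(* The mechanism releases a prefix v with probability proportional to
   exp (- eps/2 * D(S, v)), where D(S, v) is the least attribute distance from S to
   a dataset in which v is good for the relaxed thresholds 5/4 gamma and 7/4 gamma.
   Changing one record in k attributes moves every D(S, v) by at most k, which gives
   eps-nabla0 DP.  The longest 3/2 gamma-polarizing prefix of S has D(S, v) = 0, so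
   the normaliser is at least 1.  Let v be a prefix that is not good for S.  If v is
   gamma-polarizing, then some longer 2 gamma-polarizing prefix must drop below
   7/4 gamma, so D(S, v) >= gamma n / 4; and there are at most (d + 1) / gamma
   gamma-polarizing prefixes, because every record has only d + 1 prefixes.
   Otherwise gamma n / 4 records must be moved onto v, each at a cost of at least one
   plus its Hamming distance to v.  AM-GM turns this into a sum over records, and
   summing over all prefixes gives a geometric series of total size
   O(d exp (- eps gamma n / 16) / gamma). *)

From Pilot Require Import Defs.
From HB Require Import structures.
From mathcomp Require Import all_boot all_order all_algebra.
From mathcomp Require Import reals sequences exp.
From mathcomp Require Import ring lra zify.
Import Order.TTheory GRing.Theory Num.Theory.
Set Implicit Arguments. Unset Strict Implicit. Unset Printing Implicit Defensive.
Local Open Scope ring_scope.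

Lemma attr_dist_sym d (x y : example d) : attr_dist x y = attr_dist y x.
Proof.
rewrite /attr_dist eq_sym; congr (_ + _)%N.
by apply: eq_card => i; rewrite !inE eq_sym.
Qed.

Lemma attr_dist_xx d (x : example d) : attr_dist x x = 0%N.
Proof.
rewrite /attr_dist eqxx addn0; apply/eqP; rewrite cards_eq0; apply/eqP.
by apply/setP => i; rewrite !inE eqxx.
Qed.

Lemma attr_dist_triangle d (x y z : example d) :
  (attr_dist x z <= attr_dist x y + attr_dist y z)%N.
Proof.
rewrite /attr_dist addnACA; apply: leq_add; last by case: x.2; case: y.2; case: z.2.
apply: leq_trans (leq_card_setU _ _).1; apply: subset_leq_card; apply/subsetP => i.
by rewrite !inE; case: (tnth x.1 i); case: (tnth y.1 i); case: (tnth z.1 i).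
Qed.

Lemma attr_dist_gt0 d (x y : example d) : x != y -> (0 < attr_dist x y)%N.
Proof.
case: x y => [x1 x2] [y1 y2]; rewrite /attr_dist xpair_eqE /=.
have [_ | _] := eqVneq x2 y2; last by rewrite addn1.
rewrite andbT addn0 card_gt0 => ne1; apply/set0Pn.
have [i ni] : exists i, tnth x1 i != tnth y1 i.
  apply/existsP; apply: contraNT ne1; rewrite negb_exists => /forallP e.
  by apply/eqP/eq_from_tnth => i; apply/eqP; rewrite -[_ == _]negbK e.
by exists i; rewrite inE.
Qed.

Definition data_dist d n (S S' : dataset d n) : nat :=
  \sum_(j < n) attr_dist (tnth S j) (tnth S' j).

Lemma data_dist_xx d n (S : dataset d n) : data_dist S S = 0%N.
Proof. by rewrite /data_dist big1 // => j _; rewrite attr_dist_xx. Qed.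

Lemma data_dist_neighbour d n (S S' S2 : dataset d n) (i : 'I_n) :
  (forall j, j != i -> tnth S j = tnth S' j) ->
  (data_dist S' S2 <= attr_dist (tnth S i) (tnth S' i) + data_dist S S2)%N.
Proof.
move=> eqS; rewrite /data_dist.
apply: (@leq_trans (\sum_j (attr_dist (tnth S' j) (tnth S j)
                          + attr_dist (tnth S j) (tnth S2 j)))).
  by apply: leq_sum => j _; apply: attr_dist_triangle.
rewrite big_split /= leq_add2r (bigD1 i) //= big1 ?addn0 1?attr_dist_sym //.
by move=> j /eqS ->; rewrite attr_dist_xx.
Qed.

Lemma count_tnth (T : Type) n (t : n.-tuple T) (a : pred T) :
  count a t = (\sum_(j < n) a (tnth t j))%N.
Proof. by rewrite -sum1_count big_tuple big_mkcond. Qed.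

Lemma count_le_data_dist d n (S S2 : dataset d n) (p : pred (example d)) :
  (count p S <= count p S2 + data_dist S S2)%N.
Proof.
rewrite !count_tnth /data_dist -big_split /=; apply: leq_sum => j _.
have [<-|ne] := eqVneq (tnth S j) (tnth S2 j); first exact: leq_addr.
by case: (p (tnth S j)) => //; apply: leq_trans (attr_dist_gt0 ne) (leq_addl _ _).
Qed.

Section Normalize.
Variables (R : realType) (T : finType).
Implicit Types (w : T -> R) (E : {set T}).

Definition normalize w : {ffun T -> R} :=
  [ffun t => if \sum_u w u == 0 then #|T|%:R^-1 else w t / \sum_u w u].

Lemma normalize_distribution w :
  (forall t, 0 <= w t) -> (0 < #|T|)%N -> is_distribution (normalize w).
Proof.
move=> w_ge0 T_gt0; split=> [t|].
  by rewrite ffunE; case: ifP => _; rewrite ?invr_ge0 ?divr_ge0 ?sumr_ge0.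
have [Z0|Z_neq0] := eqVneq (\sum_u w u) 0.
  under eq_bigr do rewrite ffunE Z0 eqxx.
  by rewrite sumr_const -(mulr_natr #|T|%:R^-1) mulVf // pnatr_eq0 -lt0n.
by under eq_bigr do rewrite ffunE (negbTE Z_neq0); rewrite -mulr_suml divff.
Qed.

Lemma normalize_le w t :
  (forall u, 0 <= w u) -> 1 <= \sum_u w u -> normalize w t <= w t.
Proof.
move=> w_ge0 Z_ge1; have Z_gt0 : 0 < \sum_u w u by apply: lt_le_trans Z_ge1.
by rewrite ffunE gt_eqF // ler_pdivrMr // ler_peMr.
Qed.

Lemma Pr_normalize_le w w' (e : R) E :
  1 <= e -> (forall t, 0 <= w t) -> (forall t, 0 <= w' t) ->
  (forall t, w t <= e * w' t) -> (forall t, w' t <= e * w t) ->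
  Pr (normalize w) E <= e ^+ 2 * Pr (normalize w') E.
Proof.
move=> e_ge1 w_ge0 w'_ge0 le_ww' le_w'w.
have e_ge0 : 0 <= e by apply: le_trans e_ge1.
set Z := \sum_u w u; set Z' := \sum_u w' u.
have Z_ge0 : 0 <= Z by rewrite sumr_ge0.
have Z'_ge0 : 0 <= Z' by rewrite sumr_ge0.
have le_ZZ' : Z <= e * Z' by rewrite mulr_sumr ler_sum.
have le_Z'Z : Z' <= e * Z by rewrite mulr_sumr ler_sum.
have [Z0|Z_neq0] := eqVneq Z 0.
  have Z'0 : Z' = 0 by apply/le_anti; rewrite Z'_ge0 andbT -(mulr0 e) -Z0.
  rewrite /Pr (eq_bigr (normalize w')) => [|t _]; last by rewrite !ffunE -/Z -/Z' Z0 Z'0 eqxx.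
  rewrite ler_peMl ?expr_ge1 //; apply: sumr_ge0 => t _.
  by rewrite ffunE -/Z' Z'0 eqxx invr_ge0.
have Z'_neq0 : Z' != 0.
  by apply: contraNneq Z_neq0 => Z'0; apply/eqP/le_anti; rewrite Z_ge0 andbT -(mulr0 e) -Z'0.
have Z_gt0 : 0 < Z by rewrite lt_def Z_neq0.
have Z'_gt0 : 0 < Z' by rewrite lt_def Z'_neq0.
rewrite /Pr mulr_sumr; apply: ler_sum => t _; rewrite !ffunE -/Z -/Z' !gt_eqF //.
rewrite ler_pdivrMr // (le_trans (le_ww' t)) // expr2 -!mulrA ler_wpM2l //.
by rewrite mulrCA ler_peMr // mulrCA mulrC ler_pdivlMr // mul1r.
Qed.

End Normalize.

Definition empty_prefix d : Defs.prefix d :=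
  @Tagged 'I_d.+1 ord0 (fun l : 'I_d.+1 => l.-tuple bool) [tuple].

Section DistanceMechanism.
Variable R : realType.

Definition weight (c : R) d n (A : dataset d n -> {set Defs.prefix d})
    (S : dataset d n) (v : Defs.prefix d) : R :=
  \big[Order.max/0]_(S2 | v \in A S2) expR (- c * (data_dist S S2)%:R).

Section Weight.
Variables (c : R) (d n : nat) (A : dataset d n -> {set Defs.prefix d}).

Lemma weight_ge0 S v : 0 <= weight c A S v.
Proof. exact: bigmax_ge_id. Qed.

Lemma weight_ge_expR S S2 v :
  v \in A S2 -> expR (- c * (data_dist S S2)%:R) <= weight c A S v.
Proof. exact: (@le_bigmax_cond _ _ _ 0 S2 (fun S2 => v \in A S2)). Qed.

Lemma weight_ge1 S v : v \in A S -> 1 <= weight c A S v.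
Proof. by move/(weight_ge_expR S); rewrite data_dist_xx mulr0 expR0. Qed.

Lemma weight_neighbour_le (S S' : dataset d n) (i : 'I_n) v :
  0 <= c -> (forall j, j != i -> tnth S j = tnth S' j) ->
  weight c A S v <= expR (c * (attr_dist (tnth S i) (tnth S' i))%:R) * weight c A S' v.
Proof.
move=> c_ge0 eqS; apply: bigmax_le => [|S2 vAS2].
  by rewrite mulr_ge0 ?expR_ge0 ?weight_ge0.
apply: le_trans _ (ler_wpM2l (expR_ge0 _) (weight_ge_expR S' vAS2)).
rewrite -expRD ler_expR.
have := data_dist_neighbour S2 eqS; rewrite -(ler_nat R) natrD.
nra.
Qed.

End Weight.

Definition dist_mech (c : R) (A : forall d n, dataset d n -> {set Defs.prefix d}) :
  mechanism R := fun d n S => normalize (weight c (A d n) S).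

Lemma dist_mech_distribution c A d n (S : dataset d n) :
  is_distribution (dist_mech c A S).
Proof.
apply: normalize_distribution => [v|]; first exact: weight_ge0.
by apply/card_gt0P; exists (empty_prefix d).
Qed.

(* The weights and the normaliser each move by a factor [expR (eps k / 2)]. *)
Lemma dist_mech_nabla0DP (eps : R) A : 0 < eps -> nabla0DP eps (dist_mech (eps / 2) A).
Proof.
move=> eps_gt0 d n S S' i eqS E.
have c_ge0 : 0 <= eps / 2 by rewrite divr_ge0 ?ltW.
have eqS' j : j != i -> tnth S' j = tnth S j by move/eqS.
set k := attr_dist _ _.
have -> : expR (eps * k%:R) = expR (eps / 2 * k%:R) ^+ 2.
  by rewrite -expRM_natr; congr expR; field.
apply: Pr_normalize_le => [|v|v|v|v]; rewrite ?weight_ge0 //.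
- by rewrite -{1}(expR0 R) ler_expR mulr_ge0.
- exact: weight_neighbour_le.
- by rewrite /k attr_dist_sym; apply: weight_neighbour_le.
Qed.

End DistanceMechanism.

Lemma fcount_le_data_dist d n s b (S S2 : dataset d n) :
  (fcount s b S <= fcount s b S2 + data_dist S S2)%N.
Proof. exact: count_le_data_dist. Qed.

Section Polarization.
Variables (R : realType) (d n : nat).
Implicit Types (S : dataset d n) (s : seq bool) (x : R).

Lemma pol_le1 s S : pol R s S <= 1.
Proof.
rewrite /pol; have [n0|n_neq0] := eqVneq (n%:R : R) 0.
  by rewrite n0 invr0 mulr0 ler01.
have n_gt0 : 0 < n%:R :> R by rewrite lt_def n_neq0 /=.
rewrite ler_pdivrMr // mul1r ler_nat.
by rewrite (leq_trans (geq_minl _ _)) // (leq_trans (count_size _ _)) ?size_tuple.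
Qed.

Lemma pol_gt0_n_gt0 s S : 0 < pol R s S -> (0 < n)%N.
Proof. by rewrite /pol; case: n S => // S; rewrite invr0 mulr0 ltxx. Qed.

Lemma pol_sub_le_data_dist s (S S2 : dataset d n) :
  (pol R s S - pol R s S2) * n%:R <= (data_dist S S2)%:R.
Proof.
rewrite /pol -mulrBl; have [n0|n_neq0] := eqVneq (n%:R : R) 0.
  by rewrite n0 mulr0.
rewrite divfK // lerBlDr -natrD ler_nat.
have := fcount_le_data_dist s false S S2; have := fcount_le_data_dist s true S S2.
lia.
Qed.

Lemma fcount_ge_pol s b S x :
  (0 < n)%N -> x <= pol R s S -> x * n%:R <= (fcount s b S)%:R.
Proof.
move=> n_gt0; rewrite /pol ler_pdivlMr ?ltr0n // => /le_trans; apply.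
by rewrite ler_nat; case: b; [exact: geq_minr | exact: geq_minl].
Qed.

Lemma fcount_lt_pol s S x :
  (0 < n)%N -> pol R s S < x -> exists b, (fcount s b S)%:R < x * n%:R.
Proof.
move=> n_gt0; rewrite /pol ltr_pdivrMr ?ltr0n //.
by case: leqP => _ lt_x; [exists false | exists true].
Qed.

End Polarization.

Lemma big_prefix (T : Type) (idx : T) (op : Monoid.com_law idx) d
    (F : Defs.prefix d -> T) :
  \big[op/idx]_(v : Defs.prefix d) F v =
  \big[op/idx]_(l < d.+1) \big[op/idx]_(t : l.-tuple bool)
     F (Tagged (fun l : 'I_d.+1 => l.-tuple bool) t).
Proof.
rewrite (sig_big_dep _ (fun _ _ => true)
  (fun l t => F (Tagged (fun l : 'I_d.+1 => l.-tuple bool) t))) /=.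
by apply: eq_big => // -[l t].
Qed.

Lemma sum_prefix_of_le d (x : d.-tuple bool) :
  (\sum_(v : Defs.prefix d) (take (size (pseq v)) x == pseq v) <= d.+1)%N.
Proof.
rewrite big_prefix -[X in (_ <= X)%N]card_ord -sum1_card; apply: leq_sum => l _.
rewrite (eq_bigr (fun t : l.-tuple bool => if tval t == take l x then 1 else 0))%N.
  rewrite -big_mkcond sum1_card; apply/card_le1_eqP => t1 t2 /eqP e1 /eqP e2.
  by apply: val_inj; rewrite /= e1 e2.
by move=> t _; rewrite /pseq /= size_tuple eq_sym; case: eqP.
Qed.

Lemma sum_fcount_le d n (S : dataset d n) b :
  (\sum_(v : Defs.prefix d) fcount (pseq v) b S <= d.+1 * n)%N.
Proof.
under eq_bigr do rewrite /fcount count_tnth.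
rewrite exchange_big /=.
apply: (@leq_trans (\sum_(j < n) d.+1)); last by rewrite sum_nat_const card_ord mulnC.
apply: leq_sum => j _; apply: leq_trans (sum_prefix_of_le (tnth S j).1).
by apply: leq_sum => v _; case: (_ == _); rewrite ?leq_b1.
Qed.

Lemma card_polarizing_le (R : realType) (g : R) d n (S : dataset d n) :
  (0 < n)%N -> #|[set v : Defs.prefix d | polarizing g (pseq v) S]|%:R * g <= d.+1%:R.
Proof.
move=> n_gt0; set P := [set v | _].
have n_gt0' : 0 < n%:R :> R by rewrite ltr0n.
rewrite -(ler_pM2r n_gt0') -mulrA -natrM mulr_natl -sumr_const.
apply: (@le_trans _ _ (\sum_(v in P) (fcount (pseq v) false S)%:R)).
  by apply: ler_sum => v; rewrite inE; apply: fcount_ge_pol.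
rewrite -natr_sum ler_nat; apply: leq_trans (sum_fcount_le S false).
by rewrite [X in (_ <= X)%N](bigID (mem P)) leq_addr.
Qed.

Definition prefix_dist d (x : d.-tuple bool) (v : Defs.prefix d) : nat :=
  \sum_(i < tag v) (nth false x i != nth false (pseq v) i).

Lemma prefix_dist_le_attr_dist d (e e2 : example d) (v : Defs.prefix d) :
  take (size (pseq v)) e2.1 = pseq v -> (prefix_dist e.1 v <= attr_dist e e2)%N.
Proof.
move=> e2v; set F := fun i => (nth false e.1 i != nth false e2.1 i) : nat.
have size_v : size (pseq v) = tag v by rewrite size_tuple.
have le_vd : (tag v <= d)%N by rewrite -ltnS ltn_ord.
rewrite /prefix_dist (eq_bigr (F \o val)) => [|i _]; last first.
  by rewrite /F /= -e2v nth_take // size_v.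
rewrite (big_ord_widen d F le_vd) big_mkcond /= /attr_dist.
apply: leq_trans (leq_addr _ _); rewrite -sum1_card [X in (_ <= X)%N]big_mkcond.
apply: leq_sum => i _; rewrite inE !(tnth_nth false) /F.
by case: ifP; case: (_ != _).
Qed.

Section PrefixSums.
Variable R : realType.

Lemma sum_expR_prefix_dist (a : R) d (x : d.-tuple bool) :
  \sum_(v : Defs.prefix d) expR (- a * (1 + (prefix_dist x v)%:R)) =
  \sum_(l < d.+1) expR (- a) * (1 + expR (- a)) ^+ l.
Proof.
rewrite big_prefix; apply: eq_bigr => l _.
transitivity (\sum_(t : l.-tuple bool)
   expR (- a) * \prod_(i < l) expR (- a) ^+ (nth false x i != nth false t i)).
  apply: eq_bigr => t _; rewrite mulrDr mulr1 expRD; congr (_ * _).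
  by rewrite /prefix_dist /= expRM_natr expr_sum.
rewrite -mulr_sumr; congr (_ * _).
rewrite (reindex (@tuple_of_finfun bool l)); last first.
  by apply: onW_bij; exists (@finfun_of_tuple bool l);
    [exact: tuple_of_finfunK | exact: finfun_of_tupleK].
under eq_bigr => f _ do under eq_bigr => i _ do
  rewrite -(tnth_nth false) /tuple_of_finfun tnth_map tnth_ord_tuple.
rewrite -(bigA_distr_bigA (fun (i : 'I_l) (b : bool) => expR (- a) ^+ (nth false x i != b))).
rewrite (eq_bigr (fun _ => 1 + expR (- a))) ?prodr_const ?card_ord // => i _.
by rewrite big_bool /=; case: (nth false x i); rewrite /= ?expr1 ?expr0 // addrC.
Qed.

Lemma expR_half_le2 : expR (1/2 : R) <= 2.
Proof.
have := expR_ge1Dx (- (1/2) : R); have := expRxMexpNx_1 (1/2 : R).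
have := expR_gt0 (1/2 : R).
nra.
Qed.

Lemma sum_geometric_le (r : R) d :
  0 <= r -> d%:R * r <= 1/2 -> \sum_(l < d.+1) r * (1 + r) ^+ l <= d.+1%:R * (2 * r).
Proof.
move=> r_ge0 dr_le; apply: (@le_trans _ _ (\sum_(l < d.+1) 2 * r)); last first.
  by rewrite sumr_const card_ord [X in _ <= X]mulr_natl.
apply: ler_sum => l _; rewrite mulrC ler_wpM2r //.
apply: (@le_trans _ _ (expR r ^+ l)).
  by apply: lerXn2r; rewrite ?nnegrE ?expR_ge0 ?addr_ge0 // expR_ge1Dx.
rewrite -expRM_natr; apply: le_trans expR_half_le2; rewrite ler_expR.
by apply: le_trans dr_le; rewrite mulrC ler_wpM2r // ler_nat -ltnS.
Qed.

(* AM-GM applied to the numbers [expR (- a |J| h j)]. *)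
Lemma expR_sum_le_mean (I : finType) (J : {set I}) (h : I -> R) (a m : R) :
  0 <= a -> 0 < m -> m <= #|J|%:R -> (forall j, 0 <= h j) ->
  expR (- a * \sum_(j in J) h j) <= m^-1 * \sum_(j in J) expR (- a * m * h j).
Proof.
move=> a_ge0 m_gt0 m_le h_ge0.
have J_gt0 : (0 < #|J|)%N by rewrite -(ltr_nat R); apply: lt_le_trans m_le.
have J_gt0' : 0 < #|J|%:R :> R by rewrite ltr0n.
set E := fun j => expR (- a * #|J|%:R * h j).
have E_ge0 : {in J, forall j, 0 <= E j} by move=> j _; exact: expR_ge0.
have AGM := (leif_AGM E_ge0).1.
apply: (@le_trans _ _ ((\sum_(j in J) E j) / #|J|%:R)).
  rewrite -(@ler_pXn2r _ #|J|) ?nnegrE ?expR_ge0 ?divr_ge0 ?sumr_ge0 //.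
  by apply: le_trans _ AGM; rewrite -expRM_natr /E -expR_sum -mulr_sumr mulrAC.
apply: (@le_trans _ _ ((\sum_(j in J) expR (- a * m * h j)) / #|J|%:R)).
  rewrite ler_pM2r ?invr_gt0 //; apply: ler_sum => j _.
  rewrite /E ler_expR !mulNr lerN2 -!mulrA; apply: ler_wpM2l => //.
  exact: ler_wpM2r.
rewrite [X in X <= _]mulrC; apply: ler_wpM2r; last by rewrite lef_pV2 ?posrE.
by apply: sumr_ge0 => j _; exact: expR_ge0.
Qed.

End PrefixSums.

Lemma count_le_card_switched (T : Type) n (s s' : n.-tuple T) (p : pred T) :
  (count p s' <= count p s + #|[set j : 'I_n | p (tnth s' j) && ~~ p (tnth s j)]|)%N.
Proof.
rewrite !count_tnth -sum1_card [X in (_ + X)%N]big_mkcond -big_split /=.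
by apply: leq_sum => j _; rewrite inE; case: (p (tnth s j)); case: (p (tnth s' j)).
Qed.

Lemma sum_prefix_dist_switched_le d n (S S2 : dataset d n) v (p : pred (example d)) :
  (forall e, p e -> take (size (pseq v)) e.1 = pseq v) ->
  (\sum_(j in [set j : 'I_n | p (tnth S2 j) && ~~ p (tnth S j)])
     (1 + prefix_dist (tnth S j).1 v) <= 2 * data_dist S S2)%N.
Proof.
move=> pv; set J := [set j | _].
apply: (@leq_trans (\sum_(j in J) 2 * attr_dist (tnth S j) (tnth S2 j))).
  apply: leq_sum => j; rewrite inE => /andP[p2 p1].
  have ne : tnth S j != tnth S2 j by apply: contraNneq p1 => ->.
  by rewrite mul2n -addnn leq_add ?attr_dist_gt0 ?prefix_dist_le_attr_dist ?pv.
by rewrite -big_distrr leq_mul2l /data_dist [X in (_ <= X)%N](bigID (mem J)) leq_addr orbT.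
Qed.

Definition goodAt (R : realType) (a b : R) d n (S : dataset d n) : {set Defs.prefix d} :=
  [set p : Defs.prefix d | polarizing a (pseq p) S &&
     [forall q : Defs.prefix d, (size (pseq p) < size (pseq q))%N ==>
       ~~ polarizing b (pseq q) S]].

(* The longest [c]-polarizing prefix is a witness. *)
Lemma goodAt_nonempty (R : realType) (a b c : R) d n (S : dataset d n) :
  a <= c -> c <= b -> c <= pol R [::] S -> exists v, v \in goodAt a b S.
Proof.
move=> le_ac le_cb pol_c.
have [v pol_v max_v] := @arg_maxnP _ (empty_prefix d)
  (fun v => polarizing c (pseq v) S) (fun v => size (pseq v)) pol_c.
exists v; rewrite inE /polarizing (le_trans le_ac pol_v) /=.
apply/forallP => q; apply/implyP => lt_vq; apply: contraL lt_vq => pol_q.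
by rewrite -leqNgt; apply: max_v; rewrite /polarizing (le_trans le_cb pol_q).
Qed.

Section Utility.
Variables (R : realType) (eps g : R) (d n : nat) (S : dataset d n).
Hypotheses (eps_gt0 : 0 < eps) (g_gt0 : 0 < g) (n_gt0 : (0 < n)%N).

Let natrn_gt0 : 0 < n%:R :> R. Proof. by rewrite ltr0n. Qed.
Let m_gt0 : 0 < g * n%:R / 4. Proof. by rewrite divr_gt0 ?mulr_gt0. Qed.

Local Notation relaxed_good := (@goodAt R (5/4 * g) (7/4 * g) d n).
Local Notation r := (expR (- (eps * g * n%:R / 16))).
Local Notation unpolarized_bound v := ((g * n%:R / 4)^-1 * \sum_(j < n)
  expR (- (eps * g * n%:R / 16) * (1 + (prefix_dist (tnth S j).1 v)%:R))).

(* Raising [v] from below [g] to [5/4 g] polarization moves [g n / 4] records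
   onto [v], each by at least one plus its distance to [v]. *)
Lemma expR_data_dist_le_unpolarized v S2 :
  ~~ polarizing g (pseq v) S -> polarizing (5/4 * g) (pseq v) S2 ->
  expR (- (eps / 2) * (data_dist S S2)%:R) <= unpolarized_bound v.
Proof.
rewrite /polarizing -ltNge => /(fcount_lt_pol n_gt0)[b lt_S] /(fcount_ge_pol b n_gt0) ge_S2.
pose p (e : example d) := (take (size (pseq v)) e.1 == pseq v) && (e.2 == b).
pose J := [set j : 'I_n | p (tnth S2 j) && ~~ p (tnth S j)].
pose F j := 1 + (prefix_dist (tnth S j).1 v)%:R : R.
have m_le : g * n%:R / 4 <= #|J|%:R.
  by have := count_le_card_switched S S2 p; rewrite -(ler_nat R) natrD; lra.
have sumF_le : \sum_(j in J) F j <= 2 * (data_dist S S2)%:R.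
  have pv e : p e -> take (size (pseq v)) e.1 = pseq v by case/andP=> /eqP.
  have := sum_prefix_dist_switched_le S S2 pv.
  by rewrite -(ler_nat R) natr_sum natrM; under eq_bigr do rewrite natrD.
apply: (@le_trans _ _ (expR (- (eps / 4) * \sum_(j in J) F j))).
  rewrite ler_expR !mulNr lerN2.
  apply: le_trans (ler_wpM2l _ sumF_le) _; first by rewrite divr_ge0 ?ltW.
  by rewrite mulrA (_ : eps / 4 * 2 = eps / 2) //; field.
have a_ge0 : 0 <= eps / 4 by rewrite divr_ge0 ?ltW.
have F_ge0 j : 0 <= F j by rewrite addr_ge0.
apply: le_trans (expR_sum_le_mean a_ge0 m_gt0 m_le F_ge0) _.
have -> : - (eps / 4) * (g * n%:R / 4) = - (eps * g * n%:R / 16) by field.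
rewrite ler_pM2l ?invr_gt0 // [X in _ <= X](bigID (mem J)) /= lerDl.
by apply: sumr_ge0 => j _; exact: expR_ge0.
Qed.

(* In the polarized case, a longer [2 g]-polarizing prefix has to fall below
   [7/4 g], which costs [g n / 4]. *)
Lemma weight_le_bad v : v \notin good g S ->
  weight (eps / 2) relaxed_good S v <=
  if polarizing g (pseq v) S then expR (- (eps * g * n%:R / 8))
  else unpolarized_bound v.
Proof.
move=> v_bad; apply: bigmax_le => [|S2].
  case: ifP => _; first exact: expR_ge0.
  by rewrite mulr_ge0 ?invr_ge0 ?(ltW m_gt0) ?sumr_ge0 // => j _; exact: expR_ge0.
rewrite inE => /andP[pol_v2 no_longer2].
case: ifPn => [pol_v|]; last by move/expR_data_dist_le_unpolarized; apply.
have [q /andP[lt_vq pol_q]] : exists q : Defs.prefix d,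
    (size (pseq v) < size (pseq q))%N && polarizing (2 * g) (pseq q) S.
  move: v_bad; rewrite inE pol_v negb_forall => /existsP[q].
  by rewrite negb_imply negbK; exists q.
have := forallP no_longer2 q; rewrite lt_vq /polarizing -ltNge /= => pol_q2.
have D_ge : g * n%:R / 4 <= (data_dist S S2)%:R.
  apply: le_trans (pol_sub_le_data_dist R (pseq q) S S2).
  by rewrite mulrAC ler_pM2r //; move: pol_q; rewrite /polarizing; lra.
rewrite ler_expR mulNr lerN2 (_ : _ / 8 = eps / 2 * (g * n%:R / 4)); last by field.
by apply: ler_wpM2l D_ge; rewrite divr_ge0 ?ltW.
Qed.

Lemma sum_polarized_bound_le :
  \sum_(v : Defs.prefix d)
     (if polarizing g (pseq v) S then expR (- (eps * g * n%:R / 8)) else 0)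
  <= d.+1%:R * r / g.
Proof.
set P := [set v : Defs.prefix d | polarizing g (pseq v) S].
rewrite -big_mkcond sumr_const (eq_card (B := P)) => [|v]; last by rewrite inE.
have r_le : expR (- (eps * g * n%:R / 8)) <= r.
  by rewrite ler_expR lerN2 ler_pM2l ?mulr_gt0 // lef_pV2 ?posrE // ler_nat.
rewrite -[_ *+ #|P|]mulr_natr; apply: le_trans (ler_wpM2r (ler0n _ _) r_le) _.
rewrite ler_pdivlMr // -(mulrA r) (mulrC r); apply: ler_wpM2r; first exact: expR_ge0.
exact: card_polarizing_le.
Qed.

Lemma sum_unpolarized_bound_le :
  d%:R * r <= 1/2 ->
  \sum_(v : Defs.prefix d) unpolarized_bound v <= 8 * d.+1%:R * r / g.
Proof.
move=> dr_le; rewrite -mulr_sumr exchange_big /=.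
under eq_bigr do rewrite sum_expR_prefix_dist.
apply: (@le_trans _ _ ((g * n%:R / 4)^-1 * \sum_(j < n) d.+1%:R * (2 * r))).
  rewrite ler_pM2l ?invr_gt0 //; apply: ler_sum => j _.
  by apply: sum_geometric_le; rewrite ?expR_ge0.
rewrite sumr_const card_ord -[_ *+ n]mulr_natr le_eqVlt; apply/orP; left; apply/eqP.
by field; rewrite !gt_eqF.
Qed.

Lemma sum_bad_weight_le :
  d%:R * r <= 1/2 ->
  \sum_(v | v \notin good g S) weight (eps / 2) relaxed_good S v <= 9 * d.+1%:R * r / g.
Proof.
move=> dr_le; apply: (@le_trans _ _ (\sum_v ((if polarizing g (pseq v) S
    then expR (- (eps * g * n%:R / 8)) else 0) + unpolarized_bound v))).
  rewrite big_mkcond; apply: ler_sum => v _.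
  have B_ge0 : 0 <= unpolarized_bound v.
    by rewrite mulr_ge0 ?invr_ge0 ?(ltW m_gt0) ?sumr_ge0 // => j _; exact: expR_ge0.
  case: ifPn => [v_bad|_]; last by rewrite addr_ge0 //; case: ifP; rewrite ?expR_ge0.
  by apply: le_trans (weight_le_bad v_bad) _; case: ifP; rewrite ?lerDl ?add0r.
rewrite big_split /=.
apply: le_trans (lerD sum_polarized_bound_le (sum_unpolarized_bound_le dr_le)) _.
by rewrite le_eqVlt; apply/orP; left; apply/eqP; field; rewrite gt_eqF.
Qed.

Lemma dist_mech_good :
  2 * g <= pol R [::] S -> r <= g / (900 * d.+1%:R) ->
  99 / 100 <= Pr (dist_mech (eps / 2) (goodAt (5/4 * g) (7/4 * g)) S) (good g S).
Proof.
move=> pol_nil r_le.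
have g_le1 : g <= 1 by have := pol_le1 R [::] S; lra.
rewrite ler_pdivlMr ?mulr_gt0 // in r_le.
have dr_le : d%:R * r <= 1/2.
  by have := expR_ge0 (- (eps * g * n%:R / 16)); move: r_le; rewrite -(natr1 d); nra.
have [v0 v0_good] : exists v, v \in relaxed_good S.
  by apply: (goodAt_nonempty (c := 3/2 * g)); move: g_gt0; lra.
have Z_ge1 : 1 <= \sum_v weight (eps / 2) relaxed_good S v.
  rewrite (bigD1 v0) //=; apply: le_trans (weight_ge1 (eps / 2) v0_good) _.
  by rewrite lerDl sumr_ge0 // => v _; exact: weight_ge0.
have := (dist_mech_distribution (eps / 2) (goodAt (5/4 * g) (7/4 * g)) S).2.
rewrite /Pr (bigID (mem (good g S))) /=.
have : \sum_(v | v \notin good g S) dist_mech (eps / 2) (goodAt (5/4 * g) (7/4 * g)) S v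
       <= \sum_(v | v \notin good g S) weight (eps / 2) relaxed_good S v.
  by apply: ler_sum => v _; apply: normalize_le => // u; exact: weight_ge0.
have := sum_bad_weight_le dr_le.
have : 9 * d.+1%:R * r / g <= 1 / 100 by rewrite ler_pdivrMr //; lra.
lra.
Qed.

End Utility.

Section SampleSize.
Variable R : realType.

Lemma ln_ge1BV (x c : R) : 0 < c -> c <= x -> 1 - c^-1 <= ln x.
Proof.
move=> c_gt0 le_cx; have x_gt0 := lt_le_trans c_gt0 le_cx.
apply: le_trans (_ : ln c <= ln x); last by rewrite ler_ln ?posrE.
have := @le_ln1Dx R (c^-1 - 1); rewrite addrCA subrr addr0 lnV ?posrE //.
have : 0 < c^-1 by rewrite invr_gt0.
lra.
Qed.

Lemma expR_tail_le_of_sample_size (eps g : R) d n :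
  0 < eps -> 0 < g -> g <= 1 ->
  10 ^+ 5 / (eps * g) * ln (d%:R + 2) * (ln g^-1 + ln (ln (d%:R + 3)) + 2) <= n%:R ->
  expR (- (eps * g * n%:R / 16)) <= g / (900 * d.+1%:R).
Proof.
move=> eps_gt0 g_gt0 g_le1.
set P := ln (d%:R + 2); set G := ln g^-1; set L := ln (ln (d%:R + 3)) => n_ge.
have d_ge0 : 0 <= d%:R :> R := ler0n _ _.
have P_ge : 1/2 <= P.
  by have := @ln_ge1BV (d%:R + 2) 2 ltac:(lra) ltac:(lra); rewrite -/P; lra.
have ln3_ge : 2/3 <= ln (d%:R + 3 : R).
  by have := @ln_ge1BV (d%:R + 3) 3 ltac:(lra) ltac:(lra); lra.
have L_ge : -1/2 <= L.
  have := @ln_ge1BV (ln (d%:R + 3)) (2/3) ltac:(lra) ln3_ge.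
  by rewrite -/L invf_div; lra.
have G_ge0 : 0 <= G by rewrite ln_ge0 // invf_ge1.
have lnd_le : ln (d.+1%:R : R) <= P by rewrite ler_ln ?posrE -?natr1; lra.
have ln900_le : ln (900 : R) <= 899.
  by have := @le_ln1Dx R 899 ltac:(lra); rewrite (_ : 1 + 899 = 900 :> R) //; lra.
have {}n_ge : 10 ^+ 5 * P * (G + L + 2) <= eps * g * n%:R.
  rewrite (_ : 10 ^+ 5 * P * _ = eps * g * (10 ^+ 5 / (eps * g) * P * (G + L + 2))).
    by apply: ler_wpM2l n_ge; rewrite mulr_ge0 ?ltW.
  by field; rewrite !gt_eqF.
have target_gt0 : 0 < g / (900 * d.+1%:R) by rewrite divr_gt0 ?mulr_gt0.
rewrite -(lnK target_gt0) ler_expR.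
have -> : ln (g / (900 * d.+1%:R)) = - (ln 900 + ln d.+1%:R + G).
  rewrite ln_div ?posrE ?mulr_gt0 // lnM ?posrE // /G lnV ?posrE //; lra.
have : 0 <= (P - 1/2) * G by rewrite mulr_ge0 // subr_ge0.
have : 0 <= P * (L + 1/2) by rewrite mulr_ge0 //; lra.
nra.
Qed.

End SampleSize.

Theorem lemmaA5 (R : realType) :
  exists (C : R) (k : nat), 0 < C /\
  forall eps gamma : R, 0 < eps -> 0 < gamma ->
  exists M : mechanism R,
    (forall d n (S : dataset d n), is_distribution (M d n S)) /\
    nabla0DP eps M /\
    forall (d n : nat) (S : dataset d n),
      C / (eps * gamma) * ln (d%:R + 2)
        * (ln (gamma^-1) + ln (ln (d%:R + 3)) + 2) ^+ k <= n%:R ->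
      2 * gamma <= pol R [::] S ->
      99 / 100 <= Pr (M d n S) (good gamma S).
Proof.
exists (10 ^+ 5), 1%N; split; first by rewrite exprn_gt0.
move=> eps g eps_gt0 g_gt0.
exists (dist_mech (eps / 2) (goodAt (5/4 * g) (7/4 * g))); split.
  by move=> d n S; exact: dist_mech_distribution.
split; first exact: dist_mech_nabla0DP.
move=> d n S; rewrite expr1 => n_ge pol_nil.
have n_gt0 : (0 < n)%N by apply: (pol_gt0_n_gt0 (s := [::]) (S := S)); lra.
have g_le1 : g <= 1 by have := pol_le1 R [::] S; lra.
by apply: dist_mech_good => //; exact: expR_tail_le_of_sample_size.
Qed.
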